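(* Let $(S,M)$ be a surface with marked points and empty boundary, and let $T$ be an ideal triangulation of $(S,M)$ such that at each puncture there are at least three incident arcs of $T$ (an arc with both ends at the same puncture counted twice). Let $Q$ be the adjacency quiver of $T$ and let $f,g:Q_1\to Q_1$ be the maps defined below. Then: (a) the $f$-orbits on $Q_1$ all have size $3$, and they are in one-to-one correspondence with the triangles of $T$; (b) the $g$-orbits on $Q_1$ all have size at least $3$, and they are in one-to-one correspondence with the punctures.
   Context: $(S,M)$: $S$ compact, connected, oriented surface without boundary, $M$ a finite non-empty set of punctures. The adjacency quiver $Q$ has the arcs of $T$ as vertices and an arrow $i\to j$ for each puncture $p$ and each occurrence of arcs $i,j$ incident to $p$ with $j$ immediately following $i$ in counterclockwise order around $p$; such an arrow corresponds to a corner at $p$ of a triangle of $T$ with sides $i$ and $j$. For an arrow $\alpha:i\to j$ at puncture $p$, let $q$ be the puncture at the other end of $j$ (the end of $j$ not used by this corner) and $k$ the third side of that triangle, which follows $j$ counterclockwise around $q$; define $f(\alpha)$ to be the arrow $j\to k$ at $q$. Define $g(\alpha)$ to be the arrow $j\to \ell$ at $p$, where $\ell$ is the arc immediately following $j$ in counterclockwise order around $p$. The $f$-orbit (resp. $g$-orbit) of $\alpha$ is $\{f^m(\alpha):m\in\mathbb{Z}\}$ (resp. $\{g^m(\alpha):m\in\mathbb{Z}\}$). *)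

From mathcomp Require Import all_boot.
Set Implicit Arguments. Unset Strict Implicit. Unset Printing Implicit Defensive.

(* Combinatorial model of an ideal triangulation T of a closed oriented
   surface (S,M), M = punctures, obtained by gluing triangles.
   - Tr : finType            the triangles of T.
   - a "slot" (t,k) : Tr * 'I_3.  Triangle t has vertices v_0,v_1,v_2 in
     counterclockwise order.  (t,k) denotes simultaneously
       * the side k of t, running from v_k to v_(k+1) (boundary orientation),
       * the vertex v_k of t,
       * the corner of t at v_k (between sides k-1 and k).
   - iota : side -> side     the gluing of sides: side s is glued to side
     iota s, orientation reversingly (start of s = end of iota s).
     iota is a fixed-point-free involution (no boundary).
   The arcs of T are the pairs {s, iota s}; the punctures are the classes of
   triangle vertices under the identifications induced by the gluing. *)

Section Triangulation.
Variable Tr : finType.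
Notation slot := (Tr * 'I_3)%type.
Variable iota : slot -> slot.

Definition vstart (s : slot) : slot := s.
Definition vend (s : slot) : slot := (s.1, ordS s.2).

Definition vglue : rel slot := fun x y =>
  [exists s : slot, ((x == vstart s) && (y == vend (iota s)))
                 || ((x == vend s) && (y == vstart (iota s)))].

Definition same_puncture (x y : slot) : bool := connect vglue x y.

(* valence of the puncture of vertex v: number of arc-ends at it.  The end of
   the arc {s, iota s} located at vstart s (= vend (iota s)) is represented by
   the side s; loops are thus counted twice. *)
Definition valence (v : slot) : nat :=
  #|[set s : slot | same_puncture (vstart s) v]|.

Definition arc_of (s : slot) : {set slot} := [set s; iota s].

Definition tri_adj : rel Tr := fun t t' => [exists k : 'I_3, (iota (t, k)).1 == t'].

Definition is_triangulation : Prop :=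
  [/\ 0 < #|Tr|,
      (forall s, iota (iota s) = s),
      (forall s, iota s != s) &
      (forall t t', connect tri_adj t t')].  (* S connected *)

(* Arrows of the adjacency quiver Q: one per corner (t,k) at the puncture of
   v_k; counterclockwise around v_k, side k is immediately followed by side
   k-1, so the arrow goes i -> j with i = arc of side k, j = arc of side k-1. *)
Definition Q1 := slot.
Definition puncture_of (a : Q1) : slot := a.
Definition triangle_of (a : Q1) : Tr := a.1.
Definition qsource (a : Q1) : {set slot} := arc_of a.
Definition qtarget (a : Q1) : {set slot} := arc_of (a.1, ord_pred a.2).

(* f(alpha): alpha = (t,k) : i -> j at p = v_k.  j is side k-1 of t, whose
   other end is q = v_(k-1); the third side of t is side k-2 = k+1, which
   follows j counterclockwise around q; the corresponding arrow j -> k at q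
   is the corner (t, k-1). *)
Definition fmap (a : Q1) : Q1 := (a.1, ord_pred a.2).

(* g(alpha): the arrow j -> l at p, l following j ccw around p.  It is the
   corner at p of the triangle on the other side of j, i.e. the corner whose
   first side is the side glued to side k-1 of t. *)
Definition gmap (a : Q1) : Q1 := iota (a.1, ord_pred a.2).

End Triangulation.

From mathcomp Require Import all_boot.

Set Implicit Arguments.
Unset Strict Implicit.
Unset Printing Implicit Defensive.

(* The map f only rotates k inside
   the triangle t, so its orbits are the three corners of a triangle.  Each
   step of g is an elementary identification of triangle vertices, and each
   such identification is a g-step in one direction or the other; as g is
   injective, its orbits are therefore exactly the punctures, and the g-orbit
   of a corner has as many elements as there are arc-ends at its puncture. *)

Lemma val_iter_ordS n (i : 'I_n) k : val (iter k (@ordS n) i) = (i + k) %% n.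
Proof.
elim: k => [|k IHk] /=; first by rewrite addn0 modn_small.
by rewrite IHk -addn1 modnDml addn1 addnS.
Qed.

Lemma fconnect_ordS n (i j : 'I_n) : fconnect (@ordS n) i j.
Proof.
have -> : j = iter (j + (n - i)) (@ordS n) i.
  apply: val_inj; rewrite val_iter_ordS.
  by rewrite addnCA subnKC ?modnDr ?modn_small // ltnW.
exact: fconnect_iter.
Qed.

Lemma fconnect_ord_pred n (i j : 'I_n) : fconnect (@ord_pred n) i j.
Proof.
move: (fconnect_ordS i j); apply: connect_sub => x _ /eqP <-.
by rewrite fconnect_sym; [apply: connect1; rewrite /= ordSK | exact: ord_pred_inj].
Qed.

Section FOrbits.
Variable Tr : finType.

Lemma iter_fmap k (a : Q1 Tr) : iter k (@fmap Tr) a = (a.1, iter k (@ord_pred 3) a.2).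
Proof. by elim: k => [|k /= ->]; first exact: surjective_pairing. Qed.

Lemma fconnect_fmap (a b : Q1 Tr) : fconnect (@fmap Tr) a b = (a.1 == b.1).
Proof.
apply/idP/eqP => [|eq_ab].
  by apply: (fconnect_invariant (k := fun x : Q1 Tr => x.1)) => x; rewrite inE eqxx.
move/iter_findex: (fconnect_ord_pred a.2 b.2) => iter_ab.
rewrite [b](surjective_pairing b) -eq_ab -iter_ab -iter_fmap.
exact: fconnect_iter.
Qed.

Lemma order_fmap (a : Q1 Tr) : order (@fmap Tr) a = 3.
Proof.
rewrite /order (eq_card (B := setX [set a.1] [set: 'I_3])) ?cardsX ?cards1 ?cardsT ?card_ord //.
by case=> t k; rewrite in_setX !inE fconnect_fmap andbT eq_sym.
Qed.

End FOrbits.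

Section GOrbits.
Variables (Tr : finType) (iota : Tr * 'I_3 -> Tr * 'I_3).
Hypothesis iotaK : involutive iota.

Lemma gmap_inj : injective (gmap iota).
Proof.
move=> a b /(inv_inj iotaK) /(congr1 (fun c => (c.1, ordS c.2))) /=.
by rewrite !ord_predK -!surjective_pairing.
Qed.

Lemma vglue_gmap x : vglue iota x (gmap iota x).
Proof.
apply/existsP; exists (x.1, ord_pred x.2); apply/orP; right.
by rewrite /vend /vstart /gmap /= ord_predK -surjective_pairing !eqxx.
Qed.

Lemma gmap_vglue x y : vglue iota x y -> gmap iota y = x \/ gmap iota x = y.
Proof.
case/existsP=> s /orP [] /andP [/eqP -> /eqP ->]; [left | right];
  by rewrite /gmap /vend /vstart /= ordSK -surjective_pairing ?iotaK.
Qed.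

Lemma fconnect_gmap x y : fconnect (gmap iota) x y = same_puncture iota x y.
Proof.
apply/idP/idP.
  by apply: connect_sub => z _ /eqP <-; apply/connect1/vglue_gmap.
apply: connect_sub => z w /gmap_vglue [<- | <-]; last exact: fconnect1.
by rewrite fconnect_sym; [exact: fconnect1 | exact: gmap_inj].
Qed.

Lemma order_gmap a : order (gmap iota) a = valence iota a.
Proof.
apply: eq_card => s; rewrite inE /vstart -!fconnect_gmap.
by rewrite fconnect_sym //; exact: gmap_inj.
Qed.

End GOrbits.

Theorem lemma2p3 (Tr : finType) (iota : Tr * 'I_3 -> Tr * 'I_3) :
  is_triangulation iota ->
  (forall v : Tr * 'I_3, 3 <= valence iota v) ->
  (* (a) f-orbits have size 3 and correspond bijectively to triangles *)
  ((forall a : Q1 Tr, order (@fmap Tr) a = 3) /\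
   (forall a b : Q1 Tr, fconnect (@fmap Tr) a b = (triangle_of a == triangle_of b)) /\
   (forall t : Tr, exists a : Q1 Tr, triangle_of a = t)) /\
  (* (b) g-orbits have size >= 3 and correspond bijectively to punctures *)
  ((forall a : Q1 Tr, 3 <= order (gmap iota) a) /\
   (forall a b : Q1 Tr,
      fconnect (gmap iota) a b = same_puncture iota (puncture_of a) (puncture_of b)) /\
   (forall v : Tr * 'I_3, exists a : Q1 Tr, same_puncture iota (puncture_of a) v)).
Proof.
case=> _ iotaK _ _ valence_ge3.
split; (split; last split).
- exact: order_fmap.
- exact: fconnect_fmap.
- by move=> t; exists (t, ord0).
- by move=> a; rewrite order_gmap.
- exact: fconnect_gmap.
- by move=> v; exists v; apply: connect0.
Qed.
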